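(* Let $G$ be a finite group with identity $e$, and let $\mathcal{B}$ be the set of bases of a rank-$3$ matroid on ground set $G$ invariant under left multiplication by $G$. Let $g\in G$ with $e,g,g^2$ pairwise distinct, and let $k\ge 2$ be an integer with $g^k\notin\{e,g\}$. If $f_{g,g^k}\subseteq\mathcal{B}$, then $f_{g,g^2}\subseteq\mathcal{B}$.
   Context: $G$ acts on $\binom{G}{3}$ by $x\cdot\{a,b,c\}=\{xa,xb,xc\}$. For $g,h\in G$ with $e,g,h$ pairwise distinct, $f_{g,h}=\{\{a,ag,ah\}\mid a\in G\}$ (a $G$-orbit, with $f_{g,h}=f_{h,g}$). A matroid on ground set $G$ is invariant if its set of bases is preserved by this action. *)

From mathcomp Require Import all_boot all_fingroup.
Set Implicit Arguments. Unset Strict Implicit. Unset Printing Implicit Defensive.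
Local Open Scope group_scope.

Definition matroid_bases (T : finType) (B : {set {set T}}) : Prop :=
  B != set0 /\
  (forall B1 B2, B1 \in B -> B2 \in B -> forall x, x \in B1 :\: B2 ->
     exists2 y, y \in B2 :\: B1 & (B1 :\ x) :|: [set y] \in B).

Definition matroid_rank (T : finType) (B : {set {set T}}) (r : nat) : Prop :=
  forall X, X \in B -> #|X| = r.

Definition lmul_set (gT : finGroupType) (x : gT) (X : {set gT}) : {set gT} :=
  [set x * a | a in X].

(* The set of bases is preserved by the action of G (= the whole group gT). *)
Definition invariant_bases (gT : finGroupType) (B : {set {set gT}}) : Prop :=
  forall x X, X \in B -> lmul_set x X \in B.

Definition forbit (gT : finGroupType) (g h : gT) : {set {set gT}} :=
  [set [set a; a * g; a * h] | a : gT].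

From mathcomp Require Import all_boot all_fingroup.
Set Implicit Arguments.
Unset Strict Implicit.
Unset Printing Implicit Defensive.
Local Open Scope group_scope.

(* Suppose [{1, g, g^2}] is not a basis while [{1, g, g^k}] is.  In a rank-3
   matroid, [{1, g}] spans a line: the closure of an independent pair, which
   contains no basis, so any independent pair on it spans the same line.
   Translating by [g^n], [g^(n+2)] lies on the line of [g^n, g^(n+1)]; by
   induction every power of [g] lies on the line of [1, g], including [g^k],
   a contradiction. *)

Section Rank3Matroid.

Variables (T : finType) (B : {set {set T}}).
Hypotheses (basesB : matroid_bases B) (rankB : matroid_rank B 3).

Lemma basis3_uniq {p q r} : [set p; q; r] \in B -> [&& p != q, p != r & q != r].
Proof.
move/rankB; rewrite setUC cardsU1 cards2 !inE negb_or ![r == _]eq_sym.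
by case: (p != q); case: (p != r); case: (q != r).
Qed.

Lemma notin_bases_span2 {p q r x y z} :
  [set p; q; r] \in B ->
  [set p; q; x] \notin B -> [set p; q; y] \notin B -> [set p; q; z] \notin B ->
  [set x; y; z] \notin B.
Proof.
case: basesB => _ exchange pqr pqx pqy pqz; apply/negP => xyz.
have span_xyz w : w \in [set x; y; z] -> [set p; q; w] \notin B.
  by rewrite !inE => /orP[/orP[]|] /eqP->.
have /and3P[_ pr qr] := basis3_uniq pqr.
have r_out : r \in [set p; q; r] :\: [set x; y; z].
  by rewrite in_setD (contraL (@span_xyz r) pqr) !inE eqxx orbT.
have [w /setDP[/span_xyz pqw _]] := exchange _ _ pqr xyz r r_out.
suff -> : [set p; q; r] :\ r :|: [set w] = [set p; q; w] by rewrite (negbTE pqw).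
apply/setP => v; rewrite !inE; case: (eqVneq v r) => [->|_]; last by rewrite orbF.
by rewrite ![r == _]eq_sym (negbTE pr) (negbTE qr).
Qed.

Lemma bases_span2_eq {p q r p' q' r'} x :
  [set p; q; r] \in B -> [set p'; q'; r'] \in B ->
  [set p; q; p'] \notin B -> [set p; q; q'] \notin B ->
  ([set p; q; x] \in B) = ([set p'; q'; x] \in B).
Proof.
move=> pqr pqr' pqp' pqq'.
have pqp : [set p; q; p] \notin B by apply/negP => /basis3_uniq; rewrite eqxx /= !andbF.
have pqq : [set p; q; q] \notin B by apply/negP => /basis3_uniq; rewrite eqxx /= !andbF.
have p'q'p : [set p'; q'; p] \notin B := notin_bases_span2 pqr pqp' pqq' pqp.
have p'q'q : [set p'; q'; q] \notin B := notin_bases_span2 pqr pqp' pqq' pqq.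
apply/idP/idP; apply: contraLR.
  exact: notin_bases_span2 pqr' p'q'p p'q'q.
exact: notin_bases_span2 pqr pqp' pqq'.
Qed.

End Rank3Matroid.

Section InvariantBases.

Variables (gT : finGroupType) (B : {set {set gT}}).
Hypothesis invB : invariant_bases B.

Lemma lmul_set_bases x X : (lmul_set x X \in B) = (X \in B).
Proof.
have lmul_lcoset y Y : lmul_set y Y = y *: Y := lcosetE Y y.
by apply/idP/idP => [/(invB x^-1)|/invB //]; rewrite !lmul_lcoset lcosetK.
Qed.

Lemma triple_lmul_bases a p q r : ([set a * p; a * q; a * r] \in B) = ([set p; q; r] \in B).
Proof. by rewrite -[RHS](lmul_set_bases a) /lmul_set !imsetU !imset_set1. Qed.

Lemma forbit_subset_bases g h : (forbit g h \subset B) = ([set 1; g; h] \in B).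
Proof.
apply/subsetP/idP => [sub | base].
  by rewrite -[g]mul1g -[h]mul1g; apply/sub/imset_f.
by move=> X /imsetP[a _ ->]; rewrite -(triple_lmul_bases a) mulg1 in base.
Qed.

End InvariantBases.

Theorem mainTheorem10 (gT : finGroupType) (B : {set {set gT}}) (g : gT) (k : nat) :
  matroid_bases B -> matroid_rank B 3 -> invariant_bases B ->
  [/\ 1 != g, 1 != g ^+ 2 & g != g ^+ 2] ->
  (2 <= k)%N -> g ^+ k \notin [set 1; g] ->
  forbit g (g ^+ k) \subset B ->
  forbit g (g ^+ 2) \subset B.
Proof.
(* The nondegeneracy hypotheses follow from [{1, g, g^k}] being a basis. *)
move=> basesB rankB invB _ _ _.
rewrite !(forbit_subset_bases invB) => base; apply/contraT => not2.
suff line n : [set 1; g; g ^+ n] \notin B /\ [set 1; g; g ^+ n.+1] \notin B.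
  by case: (line k); rewrite base.
elim: n => [|n [line_n line_n1]].
  by rewrite expg0 expg1; split; apply/negP => /(basis3_uniq rankB); rewrite eqxx /= !andbF.
split=> //.
have base_n : [set g ^+ n; g ^+ n.+1; g ^+ n * g ^+ k] \in B.
  by have := base; rewrite -(triple_lmul_bases invB (g ^+ n)) mulg1 -expgSr.
have not2_n : [set g ^+ n; g ^+ n.+1; g ^+ n.+2] \notin B.
  by have := not2; rewrite -(triple_lmul_bases invB (g ^+ n)) mulg1 -expgSr -expgD addn2.
by rewrite (bases_span2_eq basesB rankB _ base base_n line_n line_n1).
Qed.
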